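(* If $\sigma_A\alpha_i-\sigma_S\mu_S>0$ for every individual $i$, then the system is in the full action state: for every $t_{start}\ge 0$, every individual acts infinitely (countably) many times after $t_{start}$.
   Context: Model: Fix an integer $n\ge 2$ (number of individuals) and parameters $\sigma_A,\sigma_S\ge 0$, $\sigma_C>0$, $\mu_S\in[0,1]$, $\mu_C>0$, $r>0$, $\tau\in(0,1)$, $\alpha_1,\dots,\alpha_n\in(-1,1)$. Individual $i$ has state $(x_i(t),y_i(t))$, $x_i\in(-1,1)$, $y_i\in[0,1]$, and $\gamma_i(t)=\frac{1}{n-1}\sum_{j\neq i}y_j(t)$. Between action events the state evolves by $\dot x_i=[\sigma_A\alpha_i+\sigma_S(\gamma_i-\mu_S)]\,\sigma_C(\gamma_i+\mu_C)(1-x_i)(1+x_i)$, $\dot y_i=-ry_i$. Individual $i$ ''acts'' at a time $t$ when $x_i(t)$ reaches the threshold $\tau$ (i.e. $x_i(t)\ge\tau$); immediately afterwards $x_i$ is reset to $0$ and $y_i$ is reset to $1$, and the continuous evolution resumes from the new state. Initial data satisfy $x_j(0)<\tau$, $y_j(0)=0$. *)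

From Stdlib Require Import Reals List.
From Coquelicot Require Import Coquelicot.
Open Scope R_scope.

(* Individuals are indexed by i < n (i : nat).
   gamma_i(t) = 1/(n-1) * sum_{j <> i, j < n} y_j(t). *)
Definition gamma (n : nat) (y : nat -> R -> R) (i : nat) (t : R) : R :=
  / (INR n - 1) *
  sum_f_R0 (fun j => if Nat.eq_dec j i then 0 else y j t) (n - 1).

Definition xrate (n : nat) (sA sS sC muS muC : R) (alpha : nat -> R)
  (x y : nat -> R -> R) (i : nat) (t : R) : R :=
  (sA * alpha i + sS * (gamma n y i t - muS)) * sC * (gamma n y i t + muC)
  * (1 - x i t) * (1 + x i t).

(* A (hybrid) solution of the model on [0, +oo):
   x i, y i : the state of individual i; A i t : "individual i acts at time t".
   Between action events the ODE holds; x i stays strictly below the threshold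
   tau and is continuous except at its own action times, where its left limit
   is tau (the threshold is reached) and the state is reset to (0,1).
   Action times are locally finite (no Zeno behaviour). *)
Definition is_solution (n : nat) (sA sS sC muS muC r tau : R) (alpha : nat -> R)
  (x y : nat -> R -> R) (A : nat -> R -> Prop) : Prop :=
  (forall i, (i < n)%nat -> -1 < x i 0 < tau /\ y i 0 = 0) /\
  (forall i t, (i < n)%nat -> A i t -> 0 < t) /\
  (forall i T, (i < n)%nat ->
     exists l : list R, forall t, 0 <= t <= T -> A i t -> In t l) /\
  (* the threshold is never exceeded: acting happens exactly upon reaching it *)
  (forall i t, (i < n)%nat -> 0 <= t -> x i t < tau) /\
  (forall i t, (i < n)%nat -> 0 <= t ->
     filterlim (x i) (at_right t) (locally (x i t)) /\
     filterlim (y i) (at_right t) (locally (y i t))) /\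
  (forall i t, (i < n)%nat -> 0 < t -> ~ A i t ->
     continuous (x i) t /\ continuous (y i) t) /\
  (forall i t, (i < n)%nat -> A i t ->
     filterlim (x i) (at_left t) (locally tau) /\ x i t = 0 /\ y i t = 1) /\
  (forall t, 0 < t -> (forall j, (j < n)%nat -> ~ A j t) ->
     forall i, (i < n)%nat ->
       is_derive (x i) t (xrate n sA sS sC muS muC alpha x y i t) /\
       is_derive (y i) t (- r * y i t)).

From Stdlib Require Import Reals List Lra Lia Classical.
From Coquelicot Require Import Coquelicot.
Open Scope R_scope.

(* Suppose individual [i] acts only finitely often after [tstart], and let [s] be its last
   reset (or [0]). The [y j] decay from nonnegative values, so [gamma >= 0], and the rate of
   [x i] is at least [(sA alpha_i - sS muS) sC muC (1 - x i)(1 + x i)]. This is nonnegative,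
   so [x i >= x i s > -1] after [s], and then bounded below by a positive constant while
   [x i < tau]; thus [x i] would exceed [tau] in finite time. The equations only hold off
   the action times of all individuals, a finite set on bounded intervals, which is why the
   monotonicity lemmas allow a finite exceptional set. *)

Lemma locally_ball_R (P : R -> Prop) (c : R) :
  locally c P -> exists d, 0 < d /\ forall u, Rabs (u - c) < d -> P u.
Proof. intros [e He]. exists e. split; [apply cond_pos | exact He]. Qed.

Lemma right_continuous_of_continuous (f : R -> R) (t : R) :
  continuous f t -> filterlim f (at_right t) (locally (f t)).
Proof. intros H. eapply filterlim_filter_le_1; [apply filter_le_within | exact H]. Qed.

Lemma continuous_clamp_left (f : R -> R) (a : R) :
  filterlim f (at_right a) (locally (f a)) -> continuous (fun t => f (Rmax a t)) a.
Proof.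
  intros Hra. unfold continuous. rewrite Rmax_left by lra.
  apply filterlim_locally. intros eps.
  destruct (proj1 (filterlim_locally f (f a)) Hra eps) as [d Hd].
  exists d. intros t Ht. destruct (Rlt_dec a t) as [Hat | Hat].
  - rewrite Rmax_right by lra. now apply Hd.
  - rewrite Rmax_left by lra. apply ball_center.
Qed.

Lemma increment_ge_of_derive_ge (f : R -> R) (k a b : R) : a < b ->
  filterlim f (at_right a) (locally (f a)) ->
  (forall t, a < t <= b -> continuous f t) ->
  (forall t, a < t < b -> exists d, is_derive f t d /\ k <= d) ->
  k * (b - a) <= f b - f a.
Proof.
  intros Hab Hra Hc Hd.
  (* [MVT_gen] wants continuity on [[a, b]], so work with [f] clamped at [a]; taking
     [Rmax k] of its derivative changes nothing inside and gives [>= k] at the endpoints. *)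
  set (h := fun t => f (Rmax a t)).
  assert (Hfh : forall t, a < t -> locally t (fun u => f u = h u)).
  { intros t Ht. assert (Hp : 0 < t - a) by lra.
    exists (mkposreal _ Hp). intros u Hu.
    change (Rabs (u - t) < t - a) in Hu. apply Rabs_def2 in Hu.
    unfold h. rewrite Rmax_right; lra. }
  assert (Hdh : forall t, a < t < b -> is_derive h t (Rmax k (Derive h t))).
  { intros t Ht. destruct (Hd t Ht) as [d [Hfd Hkd]].
    assert (Hhd : is_derive h t d) by (apply (is_derive_ext_loc f); [apply Hfh; lra | exact Hfd]).
    now rewrite (is_derive_unique h t d Hhd), Rmax_right. }
  destruct (MVT_gen h a b (fun t => Rmax k (Derive h t))) as [c [_ Hmvt]];
    rewrite ?Rmin_left, ?Rmax_right in * by lra.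
  - exact Hdh.
  - intros t Ht. destruct (Req_dec t a) as [-> | Hta].
    + now apply continuity_pt_filterlim, continuous_clamp_left.
    + apply (continuity_pt_ext_loc f); [apply Hfh; lra |].
      apply continuity_pt_filterlim, Hc. lra.
  - unfold h in Hmvt. rewrite Rmax_right, Rmax_left in Hmvt by lra.
    rewrite Hmvt. apply Rmult_le_compat_r; [lra | apply Rmax_l].
Qed.

Lemma increment_ge_of_derive_ge_off (f : R -> R) (k : R) (L : list R) :
  forall a b, a <= b ->
  filterlim f (at_right a) (locally (f a)) ->
  (forall t, a < t <= b -> continuous f t) ->
  (forall t, a < t < b -> ~ In t L -> exists d, is_derive f t d /\ k <= d) ->
  k * (b - a) <= f b - f a.
Proof.
  induction L as [| p L IH]; intros a b Hab Hra Hc Hd.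
  - destruct (Req_dec a b) as [<- | Hab']; [lra |].
    apply increment_ge_of_derive_ge; [lra | exact Hra | exact Hc |].
    intros t Ht. now apply Hd.
  - destruct (classic (a < p < b)) as [Hp | Hp].
    + assert (Hl : k * (p - a) <= f p - f a).
      { apply IH; [lra | exact Hra | intros t Ht; apply Hc; lra |].
        intros t Ht HtL. apply Hd; [lra |]. intros [-> | Hin]; [lra | contradiction]. }
      assert (Hr : k * (b - p) <= f b - f p).
      { apply IH; [lra | apply right_continuous_of_continuous, Hc; lra |
                   intros t Ht; apply Hc; lra |].
        intros t Ht HtL. apply Hd; [lra |]. intros [-> | Hin]; [lra | contradiction]. }
      lra.
    + apply IH; [lra | exact Hra | exact Hc |].
      intros t Ht HtL. apply Hd; [lra |]. intros [-> | Hin]; [tauto | contradiction].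
Qed.

Lemma ge_of_continuous_accumulating (f : R -> R) (c m : R) : continuous f c ->
  (forall d, 0 < d -> exists u, c - d < u <= c /\ m <= f u) -> m <= f c.
Proof.
  intros Hc Hacc. destruct (Rle_lt_dec m (f c)) as [| Hlt]; [assumption | exfalso].
  assert (He : 0 < m - f c) by lra.
  destruct (locally_ball_R _ _ (proj1 (filterlim_locally f (f c)) Hc (mkposreal _ He)))
    as [d [Hd Hball]].
  destruct (Hacc d Hd) as [u [Hu Hmu]].
  assert (Hfu : Rabs (f u - f c) < m - f c) by (apply Hball, Rabs_def1; lra).
  apply Rabs_def2 in Hfu. lra.
Qed.

Lemma stays_above (f : R -> R) (lo m a b : R) (L : list R) :
  a <= b -> lo < m -> m <= f a ->
  filterlim f (at_right a) (locally (f a)) ->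
  (forall t, a < t <= b -> continuous f t) ->
  (forall t, a < t < b -> ~ In t L -> lo < f t < m -> exists d, is_derive f t d /\ 0 <= d) ->
  m <= f b.
Proof.
  intros Hab Hlm Hma Hra Hc Hd.
  destruct (Rle_lt_dec m (f b)) as [| Hfb]; [assumption | exfalso].
  destruct (completeness (fun u => a <= u <= b /\ m <= f u)) as [c [Hub Hlub]].
  { exists b. intros u [Hu _]. lra. }
  { exists a. split; lra. }
  assert (Hac : a <= c) by (apply Hub; split; lra).
  assert (Hcb : c <= b) by (apply Hlub; intros u [Hu _]; lra).
  assert (Hfc : m <= f c).
  { destruct (Req_dec c a) as [-> | Hca]; [assumption |].
    apply ge_of_continuous_accumulating; [apply Hc; lra |].
    intros d Hd0. apply NNPP. intros Hno.
    assert (c <= c - d); [| lra].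
    apply Hlub. intros u [Hu Hmu].
    destruct (Rle_lt_dec u (c - d)) as [| Hud]; [assumption | exfalso].
    apply Hno. exists u. split; [split; [lra | apply Hub; split] |]; assumption. }
  assert (Hlt_m : forall u, c < u <= b -> f u < m).
  { intros u Hu. destruct (Rlt_le_dec (f u) m) as [| Hmu]; [assumption |].
    assert (u <= c) by (apply Hub; split; [lra | assumption]). lra. }
  assert (Hcb' : c < b) by (destruct (Req_dec c b) as [-> |]; lra).
  assert (Hrc : filterlim f (at_right c) (locally (f c))).
  { destruct (Req_dec c a) as [-> | Hca]; [assumption |].
    apply right_continuous_of_continuous, Hc. lra. }
  assert (He : 0 < f c - lo) by lra.
  destruct (locally_ball_R _ _ (proj1 (filterlim_locally f (f c)) Hrc (mkposreal _ He)))
    as [d [Hd0 Hball]].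
  set (t2 := Rmin (c + d / 2) b).
  assert (Ht2 : c < t2 <= b /\ t2 <= c + d / 2).
  { unfold t2. split; [split; [apply Rmin_glb_lt; lra | apply Rmin_r] | apply Rmin_l]. }
  assert (Hinc : 0 * (t2 - c) <= f t2 - f c).
  { apply (increment_ge_of_derive_ge_off f 0 L); [lra | exact Hrc | intros t Ht; apply Hc; lra |].
    intros t Ht HtL. apply Hd; [lra | exact HtL | split].
    - assert (Hft : Rabs (f t - f c) < f c - lo) by (apply Hball; [apply Rabs_def1; lra | lra]).
      apply Rabs_def2 in Hft. lra.
    - apply Hlt_m. lra. }
  assert (f t2 < m) by (apply Hlt_m; lra). lra.
Qed.

Lemma list_upper_bound (l : list R) : exists M, forall t, In t l -> t <= M.
Proof.
  induction l as [| a l [M HM]]; [exists 0; intros t [] |].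
  exists (Rmax a M). intros t [<- | Ht]; [apply Rmax_l |].
  eapply Rle_trans; [apply HM, Ht | apply Rmax_r].
Qed.

Lemma empty_or_max_of_finite (P : R -> Prop) (l : list R) : (forall t, P t -> In t l) ->
  (forall t, ~ P t) \/ exists m, P m /\ forall t, P t -> t <= m.
Proof.
  revert P. induction l as [| a l IH]; intros P HP; [left; exact HP |].
  destruct (IH (fun t => P t /\ t <> a)) as [Hnone | [m [[Hm Hma] Hmax]]].
  - intros t [Ht Hta]. destruct (HP t Ht) as [-> |]; [congruence | assumption].
  - destruct (classic (P a)) as [Pa | nPa].
    + right. exists a. split; [exact Pa |]. intros t Ht.
      destruct (Req_dec t a) as [-> | Hta]; [lra | destruct (Hnone t); auto].
    + left. intros t Ht. destruct (Req_dec t a) as [-> | Hta]; [auto | apply (Hnone t); auto].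
  - right. destruct (classic (P a)) as [Pa | nPa].
    + exists (Rmax a m). split.
      * destruct (Rle_dec a m); [rewrite Rmax_right | rewrite Rmax_left]; auto; lra.
      * intros t Ht. destruct (Req_dec t a) as [-> | Hta]; [apply Rmax_l |].
        eapply Rle_trans; [apply Hmax; auto | apply Rmax_r].
    + exists m. split; [exact Hm |]. intros t Ht. apply Hmax. split; [exact Ht |].
      intros ->. contradiction.
Qed.

Lemma min_rate_le_xrate_factor (sA sS sC muS muC alpha g z : R) :
  0 <= sS -> 0 < sC -> 0 < muC -> 0 <= g -> -1 <= z <= 1 ->
  0 < sA * alpha - sS * muS ->
  (sA * alpha - sS * muS) * sC * muC * ((1 - z) * (1 + z)) <=
  (sA * alpha + sS * (g - muS)) * sC * (g + muC) * (1 - z) * (1 + z).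
Proof.
  intros HsS HsC HmuC Hg Hz Hpos.
  assert (Hz2 : 0 <= (1 - z) * (1 + z)) by nra.
  assert (Hslope : sA * alpha - sS * muS <= sA * alpha + sS * (g - muS)) by nra.
  assert (Hprod : (sA * alpha - sS * muS) * sC * muC <=
                  (sA * alpha + sS * (g - muS)) * sC * (g + muC))
    by (apply Rmult_le_compat; nra).
  replace ((sA * alpha + sS * (g - muS)) * sC * (g + muC) * (1 - z) * (1 + z))
    with ((sA * alpha + sS * (g - muS)) * sC * (g + muC) * ((1 - z) * (1 + z))) by ring.
  now apply Rmult_le_compat_r.
Qed.

Section HybridSolution.

Variables (n : nat) (sA sS sC muS muC r tau : R) (alpha : nat -> R)
  (x y : nat -> R -> R) (A : nat -> R -> Prop).

Hypothesis Hn : (2 <= n)%nat.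
Hypothesis HsS : 0 <= sS.
Hypothesis HsC : 0 < sC.
Hypothesis HmuC : 0 < muC.
Hypothesis Hr : 0 < r.
Hypothesis Htau : tau < 1.
Hypothesis Hpos : forall i, (i < n)%nat -> sA * alpha i - sS * muS > 0.

Hypothesis Hinit : forall i, (i < n)%nat -> -1 < x i 0 < tau /\ y i 0 = 0.
Hypothesis Hfinite : forall i T, (i < n)%nat ->
  exists l : list R, forall t, 0 <= t <= T -> A i t -> In t l.
Hypothesis Hbelow : forall i t, (i < n)%nat -> 0 <= t -> x i t < tau.
Hypothesis Hright : forall i t, (i < n)%nat -> 0 <= t ->
  filterlim (x i) (at_right t) (locally (x i t)) /\
  filterlim (y i) (at_right t) (locally (y i t)).
Hypothesis Hcont : forall i t, (i < n)%nat -> 0 < t -> ~ A i t ->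
  continuous (x i) t /\ continuous (y i) t.
Hypothesis Hreset : forall i t, (i < n)%nat -> A i t -> x i t = 0 /\ y i t = 1.
Hypothesis Hode : forall t, 0 < t -> (forall j, (j < n)%nat -> ~ A j t) ->
  forall i, (i < n)%nat ->
    is_derive (x i) t (xrate n sA sS sC muS muC alpha x y i t) /\
    is_derive (y i) t (- r * y i t).

Lemma last_action (j : nat) (B : R) : (j < n)%nat -> 0 <= B ->
  exists s, 0 <= s <= B /\ (s = 0 \/ A j s) /\ forall t, s < t <= B -> ~ A j t.
Proof.
  intros Hj HB. destruct (Hfinite j B Hj) as [l Hl].
  destruct (empty_or_max_of_finite (fun t => 0 <= t <= B /\ A j t) l)
    as [Hnone | [m [[Hm HAm] Hmax]]].
  - intros t [Ht HAt]. now apply Hl.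
  - exists 0. split; [lra | split; [now left |]].
    intros t Ht HAt. apply (Hnone t). split; [lra | exact HAt].
  - exists m. split; [exact Hm | split; [now right |]].
    intros t Ht HAt. assert (t <= m) by (apply Hmax; split; [lra | exact HAt]). lra.
Qed.

Lemma ode_off_finite_set (T : R) : exists L : list R,
  forall t, 0 < t <= T -> ~ In t L -> forall i, (i < n)%nat ->
    is_derive (x i) t (xrate n sA sS sC muS muC alpha x y i t) /\
    is_derive (y i) t (- r * y i t).
Proof.
  assert (Hupto : forall k, (k <= n)%nat -> exists L : list R,
            forall j t, (j < k)%nat -> 0 <= t <= T -> A j t -> In t L).
  { induction k as [| k IH]; intros Hk; [exists nil; intros; lia |].
    destruct (IH ltac:(lia)) as [L HL]. destruct (Hfinite k T ltac:(lia)) as [l Hl].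
    exists (L ++ l). intros j t Hj Ht HAt. apply in_or_app.
    destruct (Nat.eq_dec j k) as [-> | Hjk]; [right; auto | left; apply (HL j); auto; lia]. }
  destruct (Hupto n (le_n n)) as [L HL]. exists L.
  intros t Ht HtL. apply Hode; [lra |]. intros j Hj HAj. apply HtL, (HL j); auto; lra.
Qed.

Lemma y_nonneg (j : nat) (t : R) : (j < n)%nat -> 0 <= t -> 0 <= y j t.
Proof.
  intros Hj Ht. destruct (last_action j t Hj Ht) as [s [Hs [Hs_reset Hs_last]]].
  destruct (ode_off_finite_set t) as [L HL].
  apply (stays_above (y j) (-1) 0 s t L); [lra | lra | | apply Hright; [exact Hj | lra] | |].
  - destruct Hs_reset as [-> | HAs].
    + rewrite (proj2 (Hinit j Hj)). lra.
    + rewrite (proj2 (Hreset j s Hj HAs)). lra.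
  - intros u Hu. apply Hcont; [exact Hj | lra | apply Hs_last; lra].
  - intros u Hu HuL [_ Hyu]. exists (- r * y j u). split; [apply HL; auto; lra | nra].
Qed.

Lemma gamma_nonneg (i : nat) (t : R) : 0 <= t -> 0 <= gamma n y i t.
Proof.
  intros Ht. unfold gamma. apply Rmult_le_pos.
  - apply Rlt_le, Rinv_0_lt_compat. apply le_INR in Hn. simpl in Hn. lra.
  - apply Rle_trans with (sum_f_R0 (fun _ => 0) (n - 1)); [rewrite sum_cte; lra | apply sum_Rle].
    intros j Hj. destruct (Nat.eq_dec j i); [lra | apply y_nonneg; [lia | exact Ht]].
Qed.

Lemma min_rate_le_xrate (i : nat) (t : R) : (i < n)%nat -> 0 <= t -> -1 <= x i t <= 1 ->
  (sA * alpha i - sS * muS) * sC * muC * ((1 - x i t) * (1 + x i t)) <=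
  xrate n sA sS sC muS muC alpha x y i t.
Proof.
  intros Hi Ht Hx.
  apply min_rate_le_xrate_factor; auto; [apply gamma_nonneg | apply Rgt_lt, Hpos]; assumption.
Qed.

Lemma x_gt_m1_at_reset (i : nat) (s : R) : (i < n)%nat -> s = 0 \/ A i s -> -1 < x i s.
Proof.
  intros Hi [-> | HAs]; [apply Hinit, Hi |].
  rewrite (proj1 (Hreset i s Hi HAs)). lra.
Qed.

Lemma x_ge_since_reset (i : nat) (s : R) : (i < n)%nat -> 0 <= s -> s = 0 \/ A i s ->
  (forall t, s < t -> ~ A i t) -> forall t, s <= t -> x i s <= x i t.
Proof.
  intros Hi Hs Hs_reset Hs_last t Ht. destruct (ode_off_finite_set t) as [L HL].
  assert (Hxs := x_gt_m1_at_reset i s Hi Hs_reset).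
  assert (Hxs_tau := Hbelow i s Hi Hs).
  apply (stays_above (x i) (-1) (x i s) s t L);
    [lra | lra | lra | apply Hright; [exact Hi | lra] | |].
  - intros u Hu. apply Hcont; [exact Hi | lra | apply Hs_last; lra].
  - intros u Hu HuL Hxu. exists (xrate n sA sS sC muS muC alpha x y i u).
    split; [apply HL; auto; lra |].
    eapply Rle_trans; [| apply min_rate_le_xrate; [exact Hi | lra | lra]].
    assert (Hai := Hpos i Hi). apply Rmult_le_pos; [| nra].
    apply Rmult_le_pos; [apply Rmult_le_pos |]; lra.
Qed.

Lemma acts_again (i : nat) (s : R) : (i < n)%nat -> 0 <= s -> s = 0 \/ A i s ->
  exists t, s < t /\ A i t.
Proof.
  intros Hi Hs Hs_reset. apply NNPP. intros Hnone.
  assert (Hs_last : forall t, s < t -> ~ A i t) by (intros t Ht HAt; apply Hnone; now exists t).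
  set (x0 := x i s).
  assert (Hx0 : -1 < x0 < tau) by (split; [apply x_gt_m1_at_reset | apply Hbelow]; assumption).
  assert (Hai := Hpos i Hi).
  set (k := (sA * alpha i - sS * muS) * sC * muC * ((1 - tau) * (1 + x0))).
  assert (Hk : 0 < k).
  { unfold k. apply Rmult_lt_0_compat; [| nra].
    apply Rmult_lt_0_compat; [apply Rmult_lt_0_compat |]; lra. }
  set (T := s + (tau - x0) / k + 1).
  assert (HT : k * (T - s) = (tau - x0) + k) by (unfold T; field; lra).
  assert (Hdist : 0 < (tau - x0) / k) by (apply Rdiv_lt_0_compat; lra).
  destruct (ode_off_finite_set T) as [L HL].
  assert (Hinc : k * (T - s) <= x i T - x0).
  { apply (increment_ge_of_derive_ge_off (x i) k L);
      [unfold T; lra | apply Hright; [exact Hi | lra] | |].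
    - intros u Hu. apply Hcont; [exact Hi | lra | apply Hs_last; lra].
    - intros u Hu HuL. exists (xrate n sA sS sC muS muC alpha x y i u).
      split; [apply HL; auto; lra |].
      assert (Hxu := x_ge_since_reset i s Hi Hs Hs_reset Hs_last u ltac:(lra)).
      assert (Hxu_tau := Hbelow i u Hi ltac:(lra)). fold x0 in Hxu.
      eapply Rle_trans; [| apply min_rate_le_xrate; [exact Hi | lra | lra]].
      apply Rmult_le_compat_l;
        [apply Rlt_le, Rmult_lt_0_compat; [apply Rmult_lt_0_compat |]; lra |].
      apply Rmult_le_compat; lra. }
  assert (x i T < tau) by (apply Hbelow; [exact Hi | unfold T; lra]).
  lra.
Qed.

Lemma acts_unboundedly : forall tstart, 0 <= tstart -> forall i, (i < n)%nat ->
  ~ (exists l : list R, forall t, tstart < t -> A i t -> In t l).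
Proof.
  intros tstart Htstart i Hi [l Hl]. destruct (list_upper_bound l) as [M HM].
  set (B := Rmax tstart M + 1).
  assert (HB : tstart < B /\ M < B).
  { unfold B. pose proof (Rmax_l tstart M). pose proof (Rmax_r tstart M). lra. }
  destruct (last_action i B Hi ltac:(lra)) as [s [Hs [Hs_reset Hs_last]]].
  destruct (acts_again i s Hi ltac:(lra) Hs_reset) as [t [Hst HAt]].
  destruct (Rle_lt_dec t B) as [HtB | HtB].
  - exact (Hs_last t ltac:(lra) HAt).
  - assert (t <= M) by (apply HM, Hl; [lra | exact HAt]). lra.
Qed.

End HybridSolution.

Theorem proposition5
  (n : nat) (Hn : (2 <= n)%nat)
  (sA sS sC muS muC r tau : R) (alpha : nat -> R)
  (HsA : 0 <= sA) (HsS : 0 <= sS) (HsC : 0 < sC)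
  (HmuS : 0 <= muS <= 1) (HmuC : 0 < muC) (Hr : 0 < r) (Htau : 0 < tau < 1)
  (Halpha : forall i, (i < n)%nat -> -1 < alpha i < 1)
  (x y : nat -> R -> R) (A : nat -> R -> Prop)
  (Hsol : is_solution n sA sS sC muS muC r tau alpha x y A)
  (Hpos : forall i, (i < n)%nat -> sA * alpha i - sS * muS > 0) :
  forall tstart, 0 <= tstart ->
  forall i, (i < n)%nat ->
    ~ (exists l : list R, forall t, tstart < t -> A i t -> In t l).
Proof.
  destruct Hsol as (Hinit & _ & Hfinite & Hbelow & Hright & Hcont & Hreset & Hode).
  exact (acts_unboundedly n sA sS sC muS muC r tau alpha x y A Hn HsS HsC HmuC Hr
           (proj2 Htau) Hpos Hinit Hfinite Hbelow Hright Hcont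
           (fun i t Hi HAt => proj2 (Hreset i t Hi HAt)) Hode).
Qed.
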